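(* Let $G=(V,E)$ be a graph (a starting position of the Maker-Breaker domination game) with minimum degree $\delta$. If $|V|<2^{\delta}$, then Dominator has a winning strategy for the Maker-Breaker domination game on $G$ when playing second.
   Context: The Maker-Breaker domination game on a finite graph $G=(V,E)$: two players, Dominator and Staller, alternately choose a not-yet-chosen vertex of $G$ (without passing), starting with all vertices unchosen. When all vertices have been chosen, Dominator wins if the set of vertices he chose is a dominating set of $G$; otherwise (some vertex has its whole closed neighborhood chosen by Staller) Staller wins. *)

From mathcomp Require Import all_boot.
Set Implicit Arguments. Unset Strict Implicit. Unset Printing Implicit Defensive.

Definition simple_graph (T : finType) (e : rel T) : Prop :=
  symmetric e /\ irreflexive e.

Definition deg (T : finType) (e : rel T) (v : T) : nat := #|[set u | e v u]|.

Definition dominating (T : finType) (e : rel T) (D : {set T}) : bool :=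
  [forall v, (v \in D) || [exists u in D, e v u]].

(* dom_wins n D S stallers_turn : with fuel n, from the position where
   Dominator has chosen D and Staller has chosen S, and it is Staller's turn
   iff [stallers_turn], Dominator has a winning strategy.  The fuel is
   #|T| at the start, which always suffices since every move chooses a new
   vertex. *)
Fixpoint dom_wins (T : finType) (e : rel T) (n : nat) (D S : {set T})
    (stallers_turn : bool) : bool :=
  match n with
  | 0 => dominating e D
  | n'.+1 =>
      if D :|: S == setT then dominating e D
      else if stallers_turn then
        [forall v, (v \notin D :|: S) ==> dom_wins e n' D (v |: S) false]
      else
        [exists v, (v \notin D :|: S) && dom_wins e n' (v |: D) S true]
  end.

(* Dominator wins the Maker-Breaker domination game playing second
   (Staller makes the first move). *)
Definition dominator_wins_second (T : finType) (e : rel T) : bool :=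
  dom_wins e #|T| set0 set0 true.

From mathcomp Require Import all_boot zify.
Set Implicit Arguments. Unset Strict Implicit. Unset Printing Implicit Defensive.

(** An Erdős–Selfridge potential argument.  Staller wins exactly when she
    claims a whole closed neighbourhood N[v], so give every vertex v whose
    N[v] Dominator has not touched the weight 2^-|N[v] \ S|, S being Staller's
    vertices.  A Staller move on x doubles the weight of the vertices with x in
    N[v], i.e. raises the potential by the gain of x; a Dominator move on y
    kills those vertices, lowering it by the gain of y.  If Dominator always
    answers with a vertex of maximal gain, Staller's next move gains at most
    what Dominator just removed, so the potential never reaches 1, the weight
    of a vertex Staller has fully claimed.  Initially the potential is
    sum_v 2^-|N[v]| <= |V| 2^-(delta+1) < 1/2, and Staller's first move at
    most doubles it. *)

Section DominationPotential.
Variables (T : finType) (e : rel T).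

Definition cnbhd (v : T) : {set T} := v |: [set u | e v u].

Lemma card_cnbhd v : irreflexive e -> #|cnbhd v| = (deg e v).+1.
Proof. by move=> irr; rewrite cardsU1 inE irr. Qed.

Definition undominated (D : {set T}) (v : T) : bool := [disjoint cnbhd v & D].

Lemma undominated_setU1 (D : {set T}) y v :
  undominated (y |: D) v = (y \notin cnbhd v) && undominated D v.
Proof.
by rewrite /undominated !disjoints_subset setCU subsetI subsetC sub1set inE.
Qed.

Lemma dominatingE (D : {set T}) :
  dominating e D = [forall v, ~~ undominated D v].
Proof.
apply: eq_forallb => v; rewrite /undominated -setI_eq0.
apply/orP/set0Pn => [[vD | /existsP[u /andP[uD evu]]] | [u]].
- by exists v; rewrite !inE eqxx.
- by exists u; rewrite !inE evu orbT.
rewrite !inE => /andP[/orP[/eqP-> | evu] uD]; first by left.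
by right; apply/existsP; exists u; rewrite uD.
Qed.

(* The weights of the argument scaled by 2^#|T|; the subtraction never
   truncates since #|cnbhd v :\: S| <= #|T|. *)
Definition weight (D S : {set T}) (v : T) : nat :=
  if undominated D v then 2 ^ (#|T| - #|cnbhd v :\: S|) else 0.

Definition potential (D S : {set T}) : nat := \sum_v weight D S v.

Definition gain (D S : {set T}) (x : T) : nat :=
  \sum_(v | x \in cnbhd v) weight D S v.

Lemma weight_le_potential (D S : {set T}) v : weight D S v <= potential D S.
Proof. by rewrite /potential (bigD1 v) ?leq_addr. Qed.

Lemma gain_le_potential (D S : {set T}) x : gain D S x <= potential D S.
Proof. by rewrite /potential (bigID (fun v => x \in cnbhd v)) leq_addr. Qed.

Lemma weight_staller_move (D S : {set T}) x v : x \notin S ->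
  weight D (x |: S) v =
    if x \in cnbhd v then 2 * weight D S v else weight D S v.
Proof.
move=> xS; rewrite /weight; case: undominated; last by case: ifP.
case: ifP => xN.
  have -> : cnbhd v :\: S = x |: (cnbhd v :\: (x |: S)).
    apply/setP => u; rewrite !inE.
    by case: (eqVneq u x) => [->|//]; move: xN; rewrite (negbTE xS) !inE.
  have := max_card (x |: (cnbhd v :\: (x |: S))).
  rewrite !cardsU1 !inE eqxx /= -expnS => ?; congr (2 ^ _); lia.
suff -> : cnbhd v :\: (x |: S) = cnbhd v :\: S by [].
apply/setP => u; move: xN; rewrite !inE => /negbT.
by case: (eqVneq u x) => [-> /negbTE->|]; rewrite ?andbF.
Qed.

Lemma weight_dominator_move (D S : {set T}) y v :
  weight (y |: D) S v = if y \in cnbhd v then 0 else weight D S v.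
Proof. by rewrite /weight undominated_setU1; case: (y \in cnbhd v). Qed.

Lemma potential_staller_move (D S : {set T}) x : x \notin S ->
  potential D (x |: S) = potential D S + gain D S x.
Proof.
move=> xS; rewrite /potential /gain [X in _ = _ + X]big_mkcond -big_split /=.
apply: eq_bigr => v _; rewrite weight_staller_move //.
by case: ifP; rewrite ?addn0 ?mul2n ?addnn.
Qed.

Lemma potential_dominator_move (D S : {set T}) y :
  potential D S = potential (y |: D) S + gain D S y.
Proof.
rewrite /potential /gain [X in _ = _ + X]big_mkcond -big_split /=.
by apply: eq_bigr => v _; rewrite weight_dominator_move; case: ifP; rewrite ?addn0.
Qed.

Lemma gain_dominator_move (D S : {set T}) y x :
  gain (y |: D) S x <= gain D S x.
Proof. by apply: leq_sum => v _; rewrite weight_dominator_move; case: ifP. Qed.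

Lemma greedy_dominator_move (D S : {set T}) y :
  potential D S < 2 ^ #|T| ->
  (forall x, x \notin D :|: S -> gain D S x <= gain D S y) ->
  forall x, x \notin D :|: S ->
    potential (y |: D) S + gain (y |: D) S x < 2 ^ #|T|.
Proof.
move=> small ymax x xfree; apply: leq_ltn_trans small.
rewrite (potential_dominator_move D S y) leq_add2l.
exact: leq_trans (gain_dominator_move _ _ _ _) (ymax x xfree).
Qed.

Lemma dominating_of_potential (D S : {set T}) :
  D :|: S = setT -> potential D S < 2 ^ #|T| -> dominating e D.
Proof.
move=> DS small; rewrite dominatingE; apply/forallP => v; apply/negP => dv.
have claimed : cnbhd v :\: S = set0.
  apply/eqP; rewrite setD_eq0; apply/subsetP => u uN.
  by have := in_setT u; rewrite -DS inE (disjointFr dv uN).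
have := leq_ltn_trans (weight_le_potential D S v) small.
by rewrite /weight dv claimed cards0 subn0 ltnn.
Qed.

Lemma dom_wins_of_potential n (D S : {set T}) :
  #|T| <= #|D :|: S| + n ->
  (potential D S < 2 ^ #|T| -> dom_wins e n D S false) /\
  (potential D S < 2 ^ #|T| ->
   (forall x, x \notin D :|: S -> potential D S + gain D S x < 2 ^ #|T|) ->
   dom_wins e n D S true).
Proof.
elim: n D S => [|n IH] D S full /=.
  have DS : D :|: S = setT.
    by apply/eqP; rewrite eqEcard subsetT cardsT -(addn0 #|_|).
  by split=> [small | small _]; apply: dominating_of_potential DS small.
case: eqP => [DS | /eqP notfull].
  by split=> [small | small _]; apply: dominating_of_potential DS small.
have fuel v : v \notin D :|: S -> #|T| <= #|v |: (D :|: S)| + n.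
  by move=> vfree; rewrite cardsU1 vfree addSnnS.
split=> [small | small safe].
  move: notfull; rewrite -subTset => /subsetPn[y0 _ y0free].
  have [y yfree ymax] :=
    @arg_maxnP _ y0 (fun v => v \notin D :|: S) (gain D S) y0free.
  apply/existsP; exists y; rewrite yfree; apply: (IH _ _ _).2.
  - by rewrite -setUA fuel.
  - apply: leq_ltn_trans small.
    by rewrite (potential_dominator_move D S y) leq_addr.
  - move=> x; rewrite -setUA inE negb_or => /andP[_ xfree].
    exact: greedy_dominator_move.
apply/forallP => x; apply/implyP => xfree; apply: (IH _ _ _).1.
  by rewrite setUCA fuel.
have [_ xS] : x \notin D /\ x \notin S by apply/norP; rewrite -in_setU.
by rewrite potential_staller_move ?safe.
Qed.

Theorem dominator_wins_second_of_cnbhd_sum :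
  2 * \sum_v 2 ^ (#|T| - #|cnbhd v|) < 2 ^ #|T| -> dominator_wins_second e.
Proof.
have potential0 : potential set0 set0 = \sum_v 2 ^ (#|T| - #|cnbhd v|).
  apply: eq_bigr => v _.
  by rewrite /weight /undominated disjoints_subset setC0 subsetT setD0.
rewrite -potential0 => small.
have [_ win] := dom_wins_of_potential (leq_addl #|set0 :|: set0 : {set T}| #|T|).
apply: win => [|x _]; apply: leq_ltn_trans small; rewrite mul2n -addnn.
  exact: leq_addr.
by rewrite leq_add2l gain_le_potential.
Qed.

End DominationPotential.

Theorem proposition3 (T : finType) (e : rel T) (delta : nat) :
  simple_graph e ->
  (exists v : T, deg e v = delta) ->
  (forall v : T, delta <= deg e v) ->
  #|T| < 2 ^ delta ->
  dominator_wins_second e.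
Proof.
move=> [_ irr] [v0 deg_v0] min_deg small_T.
apply: dominator_wins_second_of_cnbhd_sum.
have delta_lt : delta < #|T| by rewrite -deg_v0 -card_cnbhd ?max_card.
set p := 2 ^ (#|T| - delta.+1).
have sum_le : \sum_v 2 ^ (#|T| - #|cnbhd e v|) <= #|T| * p.
  rewrite -[_ * p]sum_nat_const; apply: leq_sum => v _.
  by rewrite leq_exp2l //; apply: leq_sub2l; rewrite card_cnbhd // ltnS.
have -> : 2 ^ #|T| = 2 ^ delta * (2 * p).
  by rewrite -expnS -expnD addnS -addSn subnKC.
apply: (@leq_ltn_trans (2 * (#|T| * p))); first by rewrite leq_mul2l sum_le orbT.
by rewrite mulnCA ltn_pmul2r ?muln_gt0 ?expn_gt0.
Qed.
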